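(* Let $f\colon\mathbb{R}^n\to\mathbb{R}$ be convex and differentiable with $\|\nabla f(x)-\nabla f(y)\|\le L\|x-y\|$ (Euclidean norm, $L>0$), with a minimizer $x_\star$, $f_\star=f(x_\star)$. Let $\theta_{-1}=0$, $\theta_0=1$, $\theta_{k+1}>0$ with $\theta_{k+1}^2-\theta_{k+1}=\theta_k^2$ for $k\ge0$, and $\varphi_k>0$ with $\varphi_k^2-\varphi_k=2\theta_{k-1}^2$ for $k\ge0$. Given $x_0$, let $y_0=\tilde x_0=x_0$ and for $k\ge0$: \[ y_{k+1}=x_k-\tfrac1L\nabla f(x_k),\quad x_{k+1}=y_{k+1}+\tfrac{\theta_k-1}{\theta_{k+1}}(y_{k+1}-y_k)+\tfrac{\theta_k}{\theta_{k+1}}(y_{k+1}-x_k),\quad \tilde x_{k+1}=y_{k+1}+\tfrac{\theta_k-1}{\varphi_{k+1}}(y_{k+1}-y_k)+\tfrac{\theta_k}{\varphi_{k+1}}(y_{k+1}-x_k). \] Then for $k=0,1,\dots$, \[ f(\tilde x_k)-f_\star\le\frac{L\|x_0-x_\star\|^2}{2\varphi_k^2}=\frac{L\|x_0-x_\star\|^2}{(k+\zeta+1/\sqrt2)^2}-\frac{L\|x_0-x_\star\|^2\log k}{(k+\zeta+1/\sqrt2)^3}+o\!\left(\frac1{k^3}\right), \] where $\zeta$ is the constant defined in the context (the asymptotic expansion refers to $k\to\infty$).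
   Context: For this sequence $\{\theta_k\}$ the limit $\zeta:=\lim_{k\to\infty}\big(2\theta_k-k-1-\tfrac12\log k\big)$ exists, with $\zeta\approx0.646$. $\log$ is the natural logarithm. *)

From HB Require Import structures.
From mathcomp Require Import all_boot all_order all_algebra.
From mathcomp Require Import all_classical all_reals all_analysis.
Set Implicit Arguments. Unset Strict Implicit. Unset Printing Implicit Defensive.
Import Order.TTheory GRing.Theory Num.Theory.
Import numFieldNormedType.Exports.
Local Open Scope ring_scope.

(* Euclidean inner product and norm on R^n (the library's norm on 'rV is the max norm). *)
Definition dotv {R : realType} {n : nat} (u v : 'rV[R]_n) : R :=
  \sum_(i < n) u ord0 i * v ord0 i.
Definition enorm {R : realType} {n : nat} (v : 'rV[R]_n) : R :=
  Num.sqrt (dotv v v).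

Definition convex_fun {R : realType} {n : nat} (f : 'rV[R]_n -> R) : Prop :=
  forall (x y : 'rV[R]_n) (t : R), 0 <= t -> t <= 1 ->
    f (t *: x + (1 - t) *: y) <= t * f x + (1 - t) * f y.

Definition gradient {R : realType} {n : nat} (f : 'rV[R]_n -> R) (x : 'rV[R]_n)
  : 'rV[R]_n :=
  \row_(i < n) ('D_(delta_mx ord0 i) f x : R).

(* With z_k = theta_k x_k - (theta_k - 1) y_k, the potential
     2 theta_k^2 (f x_k - f_* - |grad f x_k|^2 / (2L)) + L/2 |z_(k+1) - x_*|^2
   is nonincreasing: its increment is a nonnegative combination of the
   interpolation inequalities
     f a >= f b + <a - b, grad f b> + |grad f a - grad f b|^2 / (2L)
   of L-smooth convex functions at (x_*, x_(k+1)) and (x_k, x_(k+1)), plus a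
   polynomial identity; starting from theta_(-1) = 0 it is at most
   L/2 |x_0 - x_*|^2.  The same combination at xt_(k+1), with weights phi_(k+1)
   and phi_(k+1)^2 - phi_(k+1) = 2 theta_k^2, falls short of the potential by a
   square, which gives phi_(k+1)^2 (f xt_(k+1) - f_* ) <= potential.
   For the expansion, (sqrt 2 phi_k - 1/sqrt 2)^2 = 4 theta_(k-1)^2 + 1/2, so
   sqrt 2 phi_k = k + zeta + 1/sqrt 2 + (log k)/2 + o(1) by the definition of
   zeta, and a second order expansion of 1/B^2 around B = k + zeta + 1/sqrt 2
   gives the remainder o(1/k^3). *)

From HB Require Import structures.
From mathcomp Require Import all_boot all_order all_algebra.
From mathcomp Require Import all_classical all_reals all_analysis.
From mathcomp Require Import ring lra.
Import Order.TTheory GRing.Theory Num.Theory.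
Import numFieldNormedType.Exports.
Local Open Scope classical_set_scope.
Local Open Scope ring_scope.

Section EuclideanInnerProduct.
Context {R : realType} {n : nat}.
Implicit Types (u v w : 'rV[R]_n) (a : R).

Lemma dotvC u v : dotv u v = dotv v u.
Proof. by apply: eq_bigr => i _; rewrite mulrC. Qed.

Lemma dotvDl u v w : dotv (u + v) w = dotv u w + dotv v w.
Proof. by rewrite /dotv -big_split; apply: eq_bigr => i _; rewrite mxE mulrDl. Qed.

Lemma dotvZl a u v : dotv (a *: u) v = a * dotv u v.
Proof. by rewrite /dotv mulr_sumr; apply: eq_bigr => i _; rewrite mxE mulrA. Qed.

Lemma dotvNl u v : dotv (- u) v = - dotv u v.
Proof. by rewrite -scaleN1r dotvZl mulN1r. Qed.

Lemma dotvBl u v w : dotv (u - v) w = dotv u w - dotv v w.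
Proof. by rewrite dotvDl dotvNl. Qed.

Lemma dotvDr u v w : dotv w (u + v) = dotv w u + dotv w v.
Proof. by rewrite dotvC dotvDl !(dotvC w). Qed.

Lemma dotvZr a u v : dotv u (a *: v) = a * dotv u v.
Proof. by rewrite dotvC dotvZl dotvC. Qed.

Lemma dotvNr u v : dotv u (- v) = - dotv u v.
Proof. by rewrite dotvC dotvNl dotvC. Qed.

Lemma dotvBr u v w : dotv w (u - v) = dotv w u - dotv w v.
Proof. by rewrite dotvDr dotvNr. Qed.

Lemma dotv_ge0 u : 0 <= dotv u u.
Proof. by apply: sumr_ge0 => i _; rewrite -expr2 sqr_ge0. Qed.

Lemma dotv_eq0 u : (dotv u u == 0) = (u == 0).
Proof.
apply/idP/eqP => [|->]; last by rewrite /dotv big1 // => i _; rewrite mxE mul0r.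
rewrite psumr_eq0 => [/allP u0|i _]; last by rewrite -expr2 sqr_ge0.
apply/rowP => j; rewrite mxE; apply/eqP.
by have := u0 j (mem_index_enum j); rewrite /= mulf_eq0 orbb.
Qed.

Lemma enorm_ge0 u : 0 <= enorm u.
Proof. exact: sqrtr_ge0. Qed.

Lemma enorm_sqr u : enorm u ^+ 2 = dotv u u.
Proof. by rewrite /enorm sqr_sqrtr // dotv_ge0. Qed.

Lemma enormZ a u : enorm (a *: u) = `|a| * enorm u.
Proof. by rewrite /enorm dotvZl dotvZr mulrA -expr2 sqrtrM ?sqr_ge0 // sqrtr_sqr. Qed.

Lemma enormN u : enorm (- u) = enorm u.
Proof. by rewrite /enorm dotvNl dotvNr opprK. Qed.

Lemma norm_dotv_le u v (K : R) : 0 < K -> enorm u <= K * enorm v ->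
  `|dotv u v| <= K * dotv v v.
Proof.
move=> K_gt0 uv.
suff dotv_le w : enorm w <= K * enorm v -> dotv w v <= K * dotv v v.
  by rewrite ler_norml lerNl -dotvNl !dotv_le // enormN.
move=> wv; have w2 : dotv w w <= K ^+ 2 * dotv v v.
  have := enorm_ge0 w; rewrite -!enorm_sqr; nra.
have := dotv_ge0 (w - K *: v).
rewrite !(dotvBl, dotvBr, dotvZl, dotvZr) (dotvC v w) => sq_ge0.
by rewrite -(ler_pM2l K_gt0); nra.
Qed.

End EuclideanInnerProduct.

Lemma le0_of_forall_le_mul {R : realFieldType} (D C : R) : 0 <= C ->
  (forall t, 0 < t < 1 -> D <= C * t) -> D <= 0.
Proof.
move=> C_ge0 DC; rewrite leNgt; apply/negP => D_gt0.
have den_gt0 : 0 < D + C + 1 by lra.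
have t_gt0 : 0 < D / (D + C + 1) by rewrite divr_gt0.
have t_lt1 : D / (D + C + 1) < 1 by rewrite ltr_pdivrMr // mul1r; lra.
have := DC (D / (D + C + 1)); rewrite t_gt0 t_lt1 => /(_ isT).
by rewrite mulrA ler_pdivlMr //; nra.
Qed.

Section SmoothFunction.
Context {R : realType} {n : nat} {f : 'rV[R]_n -> R} {L : R}.
Hypotheses (f_diff : forall z, differentiable f z) (L_gt0 : 0 < L)
  (gradient_lipschitz : forall u v,
     enorm (gradient f u - gradient f v) <= L * enorm (u - v)).
Implicit Types (x v : 'rV[R]_n).

Local Notation g := (gradient f).

Lemma derive_gradient x v : 'D_v f x = dotv v (g x).
Proof.
rewrite deriveE // {1}(row_sum_delta v) linear_sum /dotv.
by apply: eq_bigr => i _; rewrite linearZ /= mxE -deriveE.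
Qed.

Lemma is_derive_line x v (t : R) :
  is_derive t 1 (fun s : R => f (x + s *: v)) (dotv v (g (x + t *: v))).
Proof.
have shiftE : (fun h : R => h^-1 *: (((fun s => f (x + s *: v)) \o shift t) (h *: 1)
                 - f (x + t *: v)))
            = (fun h : R => h^-1 *: ((f \o shift (x + t *: v)) (h *: v) - f (x + t *: v))).
  apply: funext => h /=; congr (_ *: (f _ - _)).
  by rewrite [h%:A]mulr1 scalerDl addrCA.
apply: DeriveDef; first by rewrite /derivable shiftE; exact: diff_derivable.
by rewrite /derive shiftE -derive_gradient.
Qed.

Lemma gradient_dotv_lipschitz x v (c : R) : 0 < c ->
  `|dotv (g (x + c *: v) - g x) v| <= L * c * dotv v v.
Proof.
move=> c_gt0; apply: norm_dotv_le; first exact: mulr_gt0.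
apply: le_trans (gradient_lipschitz _ _) _.
by rewrite addrAC subrr add0r enormZ gtr0_norm // mulrA.
Qed.

(* The mean value theorem for s |-> f (x + s v) - s <v, g x> - a s^2 on [0, 1];
   the quadratic correction a is what yields the sharp constant L/2 below. *)
Lemma smooth_mvt x v (a : R) : exists2 c : R, 0 < c < 1 &
  f (x + v) - f x - dotv v (g x) - a = dotv (g (x + c *: v) - g x) v - 2 * a * c.
Proof.
pose h (s : R) := f (x + s *: v) - s * dotv v (g x) - a * s ^+ 2.
have h_derive (s : R) :
    is_derive s (1 : R) h (dotv v (g (x + s *: v)) - dotv v (g x) - a * (2 * s)).
  have line_derive := is_derive_line x v s.
  apply: is_derive_eq.
  rewrite scaler0 add0r ![_%:A]mulr1; change (a *: (s + s)) with (a * (s + s)); ring.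
have h_cont : {within `[0, 1], continuous h}.
  by apply: derivable_within_continuous => s _; case: (h_derive s).
have [c c01 mvt] := MVT (@ltr01 R) (fun s _ => h_derive s) h_cont.
exists c; first by rewrite in_itv /= in c01.
move: mvt; rewrite /h !scale1r !scale0r addr0 mul1r mul0r expr1n expr0n mulr1 mulr0 !subr0.
rewrite dotvBl !(dotvC v) => mvt.
by apply: eq_trans (eq_trans _ mvt) _; ring.
Qed.

Lemma smooth_taylor_bound x v :
  `|f (x + v) - f x - dotv v (g x)| <= L / 2 * dotv v v.
Proof.
have dotv_lip c : 0 < c -> `|dotv (g (x + c *: v) - g x) v| <= 2 * (L / 2 * dotv v v) * c.
  by move=> c_gt0; rewrite (_ : _ * c = L * c * dotv v v) ?gradient_dotv_lipschitz //; field.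
rewrite ler_norml; apply/andP; split.
- have [c /andP[c_gt0 _] mvt] := smooth_mvt x v (- (L / 2 * dotv v v)).
  by move: (dotv_lip c c_gt0); rewrite ler_norml; lra.
- have [c /andP[c_gt0 _] mvt] := smooth_mvt x v (L / 2 * dotv v v).
  by move: (dotv_lip c c_gt0); rewrite ler_norml; lra.
Qed.

Lemma smooth_upper_bound x v : f (x + v) <= f x + dotv v (g x) + L / 2 * dotv v v.
Proof. by have := smooth_taylor_bound x v; rewrite ler_norml; lra. Qed.

Lemma gradient_eq0_at_min xs : (forall z, f xs <= f z) -> g xs = 0.
Proof.
move=> xs_min; apply/eqP; rewrite -dotv_eq0 eq_le dotv_ge0 andbT.
have := smooth_upper_bound xs (- (L^-1 *: g xs)).
rewrite !(dotvNl, dotvNr, dotvZl, dotvZr) opprK.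
have -> : L / 2 * (L^-1 * (L^-1 * dotv (g xs) (g xs))) = L^-1 * dotv (g xs) (g xs) / 2.
  by field; rewrite gt_eqF.
move: (xs_min (xs - L^-1 *: g xs)) => min_le upper_le.
have : L^-1 * dotv (g xs) (g xs) <= 0 by lra.
by rewrite pmulr_rle0 // invr_gt0.
Qed.

Hypothesis f_convex : convex_fun f.

Lemma convex_gradient_ineq x y : f x + dotv (y - x) (g x) <= f y.
Proof.
rewrite -subr_le0; set v := y - x.
apply: (@le0_of_forall_le_mul _ _ (L / 2 * dotv v v)).
  by rewrite mulr_ge0 ?dotv_ge0 // divr_ge0 // ltW.
move=> t /andP[t_gt0 t_lt1].
have := smooth_taylor_bound x (t *: v); rewrite ler_norml => /andP[lower _].
have := f_convex y x t (ltW t_gt0) (ltW t_lt1).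
have -> : t *: y + (1 - t) *: x = x + t *: v.
  by rewrite /v scalerBl scale1r scalerBr addrCA addrA.
rewrite !(dotvZl, dotvZr) in lower *.
move=> convex; rewrite -(ler_pM2l t_gt0); nra.
Qed.

Lemma smooth_convex_interpolation a b :
  f b + dotv (a - b) (g b) + (2 * L)^-1 * dotv (g a - g b) (g a - g b) <= f a.
Proof.
set d := g a - g b.
have d_split : L^-1 * dotv d (g a) - L^-1 * dotv d (g b) = L^-1 * dotv d d.
  by rewrite -mulrBr -dotvBr.
clearbody d.
have upper := smooth_upper_bound a (- (L^-1 *: d)).
have cvx := convex_gradient_ineq b (a - L^-1 *: d).
rewrite !(dotvBl, dotvNl, dotvZl, dotvNr, dotvZr) in upper cvx *.
have quad : L / 2 * (L^-1 * (L^-1 * dotv d d)) = (2 * L)^-1 * dotv d d.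
  by field; rewrite gt_eqF.
have half : L^-1 * dotv d d = 2 * ((2 * L)^-1 * dotv d d).
  by field; rewrite gt_eqF.
lra.
Qed.
End SmoothFunction.

Section StepIdentities.
Context {R : realType} {n : nat}.
Implicit Types (L s p : R) (xp gp w xs xn gn zn xt h : 'rV[R]_n).

Lemma step_distance_identity xs {L s xp gp w xn gn zn} : L != 0 -> s != 0 ->
  xn = s^-1 *: ((s - 1) *: (xp - L^-1 *: gp) + w) ->
  zn = w - (2 * s / L) *: gn ->
  L / 2 * dotv (zn - xs) (zn - xs) - L / 2 * dotv (w - xs) (w - xs)
  = 2 * s * (dotv (xs - xn) gn + (2 * L)^-1 * dotv gn gn)
    + 2 * (s ^+ 2 - s) * (dotv (xp - xn) gn + (2 * L)^-1 * dotv (gp - gn) (gp - gn))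
    + s ^+ 2 / L * dotv gn gn - (s ^+ 2 - s) / L * dotv gp gp.
Proof.
move=> L_neq0 s_neq0 -> ->; rewrite /dotv.
do 6 (rewrite ?mulr_sumr -?sumrN -?big_split /=).
by apply: eq_bigr => i _; rewrite !mxE; field; apply/andP.
Qed.

Lemma step_value_identity xs h {L p xp gp w xt} : L != 0 -> p != 0 ->
  xt = p^-1 *: ((p - 1) *: (xp - L^-1 *: gp) + w) ->
  p * (dotv (xs - xt) h + (2 * L)^-1 * dotv h h)
  + (p ^+ 2 - p) * (dotv (xp - xt) h + (2 * L)^-1 * dotv (gp - h) (gp - h))
  - (p ^+ 2 - p) / (2 * L) * dotv gp gp + L / 2 * dotv (w - xs) (w - xs)
  = (2 * L)^-1 * dotv (p *: h - L *: (w - xs)) (p *: h - L *: (w - xs)).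
Proof.
move=> L_neq0 p_neq0 ->; rewrite /dotv.
do 6 (rewrite ?mulr_sumr -?sumrN -?big_split /=).
by apply: eq_bigr => i _; rewrite !mxE; field; apply/andP.
Qed.
End StepIdentities.

Definition potential {R : realType} {n : nat} (f : 'rV[R]_n -> R) (L : R)
    (xs : 'rV[R]_n) (t : R) (xp w : 'rV[R]_n) : R :=
  2 * t ^+ 2 * (f xp - f xs - (2 * L)^-1 * dotv (gradient f xp) (gradient f xp))
  + L / 2 * dotv (w - xs) (w - xs).

Lemma potential0 {R : realType} {n : nat} (f : 'rV[R]_n -> R) L xs xp w :
  potential f L xs 0 xp w = L / 2 * dotv (w - xs) (w - xs).
Proof. by rewrite /potential expr0n mulr0 mul0r add0r. Qed.

Section OptimizedGradientStep.
Context {R : realType} {n : nat} {f : 'rV[R]_n -> R} {L : R} {xs : 'rV[R]_n}.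
Hypotheses (f_diff : forall z, differentiable f z) (L_gt0 : 0 < L)
  (gradient_lipschitz : forall u v,
     enorm (gradient f u - gradient f v) <= L * enorm (u - v))
  (f_convex : convex_fun f) (xs_min : forall z, f xs <= f z).
Implicit Types (t s p : R) (xp w xn zn xt : 'rV[R]_n).

Local Notation g := (gradient f).

Local Notation potential := (potential f L xs).

Let L_neq0 : L != 0. Proof. by rewrite gt_eqF. Qed.

Lemma interpolation_at_min z :
  f z + dotv (xs - z) (g z) + (2 * L)^-1 * dotv (g z) (g z) <= f xs.
Proof.
have := smooth_convex_interpolation f_diff L_gt0 gradient_lipschitz f_convex xs z.
by rewrite (gradient_eq0_at_min f_diff L_gt0 gradient_lipschitz _ xs_min) sub0r dotvNl dotvNr opprK.
Qed.

Lemma potential_step {t s xp w xn zn} : 0 < s -> s ^+ 2 - s = t ^+ 2 ->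
  xn = s^-1 *: ((s - 1) *: (xp - L^-1 *: g xp) + w) ->
  zn = w - (2 * s / L) *: g xn ->
  potential s xn zn <= potential t xp w.
Proof.
move=> s_gt0 st xnE znE.
have := step_distance_identity xs L_neq0 (lt0r_neq0 s_gt0) xnE znE.
have gap_xs := interpolation_at_min xn.
have gap_xp := smooth_convex_interpolation f_diff L_gt0 gradient_lipschitz f_convex xp xn.
have st_ge0 : 0 <= s ^+ 2 - s by rewrite st sqr_ge0.
have := ler_wpM2l (ltW s_gt0) gap_xs; have := ler_wpM2l st_ge0 gap_xp.
rewrite /potential -st; nra.
Qed.

Lemma value_le_potential {t p xp w xt} : 0 < p -> p ^+ 2 - p = 2 * t ^+ 2 ->
  xt = p^-1 *: ((p - 1) *: (xp - L^-1 *: g xp) + w) ->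
  p ^+ 2 * (f xt - f xs) <= potential t xp w.
Proof.
move=> p_gt0 pt xtE.
have := step_value_identity xs (g xt) L_neq0 (lt0r_neq0 p_gt0) xtE.
have gap_xs := interpolation_at_min xt.
have gap_xp := smooth_convex_interpolation f_diff L_gt0 gradient_lipschitz f_convex xp xt.
have pt_ge0 : 0 <= p ^+ 2 - p by rewrite pt mulr_ge0 ?sqr_ge0.
have := ler_wpM2l (ltW p_gt0) gap_xs; have := ler_wpM2l pt_ge0 gap_xp.
have : 0 <= (2 * L)^-1 * dotv (p *: g xt - L *: (w - xs)) (p *: g xt - L *: (w - xs)).
  by rewrite mulr_ge0 ?dotv_ge0 // invr_ge0 mulr_ge0 // ltW.
rewrite /potential -pt; nra.
Qed.
End OptimizedGradientStep.

Lemma root_sqr_sub_eq0 {R : numDomainType} (p : R) : 0 < p -> p ^+ 2 - p = 0 -> p = 1.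
Proof.
move=> p_gt0 /eqP; rewrite expr2 -{3}[p]mulr1 -mulrBr mulf_eq0 subr_eq0.
by rewrite (negbTE (lt0r_neq0 p_gt0)) => /eqP.
Qed.

Section OptimizedGradientMethod.
Context {R : realType} {n : nat} {f : 'rV[R]_n -> R} {L : R} {xs : 'rV[R]_n}
  {theta phi : nat -> R} {x y xt : nat -> 'rV[R]_n}.
Hypotheses (f_diff : forall z, differentiable f z) (L_gt0 : 0 < L)
  (gradient_lipschitz : forall u v,
     enorm (gradient f u - gradient f v) <= L * enorm (u - v))
  (f_convex : convex_fun f) (xs_min : forall z, f xs <= f z)
  (theta0 : theta 0%N = 1)
  (thetaS : forall k, 0 < theta k.+1 /\ theta k.+1 ^+ 2 - theta k.+1 = theta k ^+ 2)
  (phi_gt0 : forall k, 0 < phi k)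
  (phi0 : phi 0%N ^+ 2 - phi 0%N = 2 * 0 ^+ 2)
  (phiS : forall k, phi k.+1 ^+ 2 - phi k.+1 = 2 * theta k ^+ 2)
  (xt0 : xt 0%N = x 0%N)
  (step : forall k,
     y k.+1 = x k - L^-1 *: gradient f (x k) /\
     x k.+1 = y k.+1 + ((theta k - 1) / theta k.+1) *: (y k.+1 - y k)
                     + (theta k / theta k.+1) *: (y k.+1 - x k) /\
     xt k.+1 = y k.+1 + ((theta k - 1) / phi k.+1) *: (y k.+1 - y k)
                      + (theta k / phi k.+1) *: (y k.+1 - x k)).

Local Notation g := (gradient f).
Local Notation potential := (potential f L xs).

Let z k := theta k *: x k - (theta k - 1) *: y k.

Let theta_neq0 k : theta k.+1 != 0.
Proof. by case: (thetaS k) => /lt0r_neq0. Qed.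

Let z0 : z 0 = x 0.
Proof. by rewrite /z theta0 subrr scale0r subr0 scale1r. Qed.

Let zS k : z k.+1 = z k - (2 * theta k / L) *: g (x k).
Proof.
have [yE [xE _]] := step k.
rewrite /z xE yE; apply/rowP => j; rewrite !mxE.
by field; rewrite theta_neq0 gt_eqF.
Qed.

Let xS k : x k.+1 = (theta k.+1)^-1 *:
  ((theta k.+1 - 1) *: (x k - L^-1 *: g (x k)) + z k.+1).
Proof.
have [<- _] := step k; rewrite /z; apply/rowP => j; rewrite !mxE.
by field.
Qed.

Let xtS k : xt k.+1 = (phi k.+1)^-1 *:
  ((phi k.+1 - 1) *: (x k - L^-1 *: g (x k)) + z k.+1).
Proof.
have [yE [xE xtE]] := step k.
rewrite -yE /z xtE xE; apply/rowP => j; rewrite !mxE.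
by field; rewrite theta_neq0 lt0r_neq0.
Qed.

Local Notation step_decrease :=
  (potential_step f_diff L_gt0 gradient_lipschitz f_convex xs_min).
Local Notation value_bound :=
  (value_le_potential f_diff L_gt0 gradient_lipschitz f_convex xs_min).

(* The initial step is a potential step from theta_(-1) = 0, with z_0 = x_0. *)
Lemma potential_le_init k :
  potential (theta k) (x k) (z k.+1) <= L / 2 * dotv (x 0 - xs) (x 0 - xs).
Proof.
elim: k => [|k IHk].
  rewrite theta0 -(potential0 f L xs (x 0)).
  apply: step_decrease; first exact: ltr01.
  - by rewrite expr1n expr0n subrr.
  - by rewrite invr1 subrr scale0r add0r scale1r.
  - by rewrite zS z0 theta0 mulr1.
apply: le_trans IHk; have [theta_gt0 thetaE] := thetaS k.
exact: step_decrease theta_gt0 thetaE (xS k) (zS k.+1).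
Qed.

Lemma value_le_init k :
  phi k ^+ 2 * (f (xt k) - f xs) <= L / 2 * dotv (x 0 - xs) (x 0 - xs).
Proof.
case: k => [|k].
  have phi01 : phi 0 = 1 by apply: root_sqr_sub_eq0; rewrite ?phi0 ?expr0n ?mulr0.
  rewrite -(potential0 f L xs (x 0)).
  apply: (value_bound (phi_gt0 0) phi0).
  by rewrite phi01 xt0 invr1 subrr scale0r add0r scale1r.
apply: le_trans (potential_le_init k).
exact: value_bound (phi_gt0 _) (phiS k) (xtS k).
Qed.

Lemma ogm_rate k : f (xt k) - f xs <= L * enorm (x 0%N - xs) ^+ 2 / (2 * phi k ^+ 2).
Proof.
have phi2_gt0 : 0 < 2 * phi k ^+ 2 by rewrite mulr_gt0 // exprn_gt0.
rewrite ler_pdivlMr // enorm_sqr.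
have := value_le_init k; nra.
Qed.
End OptimizedGradientMethod.

Lemma inv_sqr_expansion_bound {R : realFieldType} {k A B l e : R} :
  0 < k -> k / 2 <= A -> k <= B -> 0 <= l -> `|e| <= 1 -> B = A + l + e ->
  `|((B ^+ 2)^-1 - (A ^+ 2)^-1 + 2 * l / A ^+ 3) * k ^+ 3|
    <= 16 * `|e| + 20 * ((l + 1) ^+ 2 / k).
Proof.
move=> k_gt0 kA kB l_ge0 e_le1 BE.
have A_gt0 : 0 < A by lra.
have B_gt0 : 0 < B by lra.
set a := k / A; set b := k / B; set d := l + e.
have expansion : ((B ^+ 2)^-1 - (A ^+ 2)^-1 + 2 * l / A ^+ 3) * k ^+ 3
    = d ^+ 2 * (a ^+ 2 * b ^+ 2 + 2 * (a ^+ 3 * b)) / k - 2 * e * a ^+ 3.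
  by rewrite /a /b /d BE; field; rewrite -BE !gt_eqF.
have a_ge0 : 0 <= a by rewrite divr_ge0 ?ltW.
have b_ge0 : 0 <= b by rewrite divr_ge0 ?ltW.
have a_le2 : a <= 2 by rewrite ler_pdivrMr //; lra.
have b_le1 : b <= 1 by rewrite ler_pdivrMr //; lra.
have a2 : a ^+ 2 <= 4 by rewrite (_ : 4 = 2 ^+ 2) ?ler_pXn2r ?nnegrE //; ring.
have a3 : a ^+ 3 <= 8 by rewrite (_ : 8 = 2 ^+ 3) ?ler_pXn2r ?nnegrE //; ring.
have b2 : b ^+ 2 <= 1 by rewrite expr_le1.
have ab : a ^+ 2 * b ^+ 2 + 2 * (a ^+ 3 * b) <= 20.
  have := ler_pM (exprn_ge0 2 a_ge0) (exprn_ge0 2 b_ge0) a2 b2.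
  have := ler_pM (exprn_ge0 3 a_ge0) b_ge0 a3 b_le1.
  lra.
have d2 : d ^+ 2 <= (l + 1) ^+ 2.
  move: e_le1; rewrite ler_norml => /andP[e_ge e_le].
  have : 0 <= (l + 1 - d) * (l + 1 + d) by rewrite mulr_ge0 // /d; lra.
  by rewrite -subr_sqr subr_ge0.
have P_ge0 : 0 <= a ^+ 2 * b ^+ 2 + 2 * (a ^+ 3 * b).
  exact: addr_ge0 (mulr_ge0 (exprn_ge0 2 a_ge0) (exprn_ge0 2 b_ge0))
    (mulr_ge0 (ler0n _ 2) (mulr_ge0 (exprn_ge0 3 a_ge0) b_ge0)).
rewrite expansion [X in _ <= X]addrC; apply: le_trans (ler_normB _ _) _.
apply: lerD.
  rewrite ger0_norm; last exact: divr_ge0 (mulr_ge0 (sqr_ge0 d) P_ge0) (ltW k_gt0).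
  rewrite [X in _ <= X]mulrA ler_pM2r ?invr_gt0 // [X in _ <= X]mulrC.
  exact: ler_pM (sqr_ge0 d) P_ge0 d2 ab.
rewrite normrM normrM (ger0_norm (exprn_ge0 3 a_ge0)) ger0_norm //.
have := ler_pM (normr_ge0 e) (exprn_ge0 3 a_ge0) (lexx _) a3.
lra.
Qed.

Section RealBounds.
Context {R : realType}.
Implicit Types (s t p m : R).

Lemma sqr_sub_self_ge {s t} : 0 < s -> 0 <= t -> s ^+ 2 - s = t ^+ 2 -> t + 2^-1 <= s.
Proof.
move=> s_gt0 t_ge0 st.
have s_ge1 : 1 <= s by move: (sqr_ge0 t); rewrite -st expr2; nra.
have : t ^+ 2 <= (s - 2^-1) ^+ 2.
  by rewrite (_ : (s - 2^-1) ^+ 2 = t ^+ 2 + 4^-1); [lra | rewrite -st; field].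
rewrite -ler_sqrt ?sqr_ge0 // !sqrtr_sqr !ger0_norm //; lra.
Qed.

Lemma sqrt2_mul_root_bounds {p t} : 0 < p -> 0 < t -> p ^+ 2 - p = 2 * t ^+ 2 ->
  0 <= Num.sqrt 2 * p - (Num.sqrt 2)^-1 - 2 * t <= (8 * t)^-1.
Proof.
move=> p_gt0 t_gt0 pt; set w := Num.sqrt 2 * p - (Num.sqrt 2)^-1.
have s2_gt0 : 0 < Num.sqrt 2 :> R by rewrite sqrtr_gt0.
have s2_sqr : Num.sqrt 2 ^+ 2 = 2 :> R by rewrite sqr_sqrtr.
have w_sqr : w ^+ 2 = (2 * t) ^+ 2 + 2^-1.
  have -> : w ^+ 2 = Num.sqrt 2 ^+ 2 * p ^+ 2 - 2 * p + (Num.sqrt 2 ^+ 2)^-1.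
    by rewrite /w; field; rewrite gt_eqF.
  by rewrite s2_sqr -[2 * p ^+ 2 - 2 * p]mulrBr pt; ring.
have w_ge0 : 0 <= w.
  have -> : w = (Num.sqrt 2 ^+ 2 * p - 1) / Num.sqrt 2.
    by rewrite /w; field; rewrite gt_eqF.
  have : 0 < p ^+ 2 - p by rewrite pt mulr_gt0 ?exprn_gt0.
  by rewrite s2_sqr expr2 => pp; rewrite divr_ge0 ?ltW //; nra.
have w_ge : 2 * t <= w.
  have t2_ge0 : 0 <= 2 * t by lra.
  by rewrite -ler_sqr ?nnegrE // w_sqr; lra.
have : (w - 2 * t) * (w + 2 * t) = 2^-1 by rewrite -subr_sqr w_sqr addrAC subrr add0r.
rewrite subr_ge0 w_ge /= => prod; rewrite -div1r ler_pdivlMr ?mulr_gt0 //; nra.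
Qed.

Lemma ln_succ_sub_bounds {m} : 0 < m -> 0 <= ln (m + 1) - ln m <= m^-1.
Proof.
move=> m_gt0; rewrite subr_ge0 ler_ln ?posrE ?ltrDl ?ler_wpDr //=; last lra.
have -> : m + 1 = m * (1 + m^-1) by rewrite mulrDr mulr1 divff // gt_eqF.
have m_inv_gt0 : 0 < m^-1 by rewrite invr_gt0.
rewrite lnM ?posrE ?addr_gt0 // addrAC subrr add0r le_ln1Dx //; lra.
Qed.

Lemma half_ln_sqr_div_le {k : R} : 1 <= k -> (ln k / 2 + 1) ^+ 2 / k <= 9 / Num.sqrt k.
Proof.
move=> k_ge1; set q := Num.sqrt (Num.sqrt k).
have k_gt0 : 0 < k by lra.
have q_ge1 : 1 <= q by rewrite -sqrtr1 ler_sqrt ?sqrtr_ge0 // -sqrtr1 ler_sqrt //; lra.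
have q2 : q ^+ 2 = Num.sqrt k by rewrite sqr_sqrtr ?sqrtr_ge0.
have q4 : q ^+ 4 = k by rewrite (_ : 4 = 2 * 2)%N // exprM q2 sqr_sqrtr //; lra.
have ln_le : ln k / 2 + 1 <= 3 * q.
  rewrite -q4 lnXn; last lra.
  have := ln_sublinear (lt_le_trans ltr01 q_ge1); rewrite -mulr_natr; lra.
have ln_sqr_le : (ln k / 2 + 1) ^+ 2 <= (3 * q) ^+ 2.
  by rewrite ler_sqr ?nnegrE //; have := ln_ge0 k_ge1; lra.
rewrite ler_pdivrMr // -q2 -[X in _ <= _ * X]q4.
have -> : 9 / q ^+ 2 * q ^+ 4 = (3 * q) ^+ 2 by field; rewrite gt_eqF //; lra.
exact: ln_sqr_le.
Qed.

Lemma half_ln_sqr_div_cvg0 :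
  (fun k : nat => (ln (k%:R : R) / 2 + 1) ^+ 2 / k%:R) @ \oo --> 0.
Proof.
apply/cvgr0Pnorm_lt => eps eps_gt0; near=> k.
have k_ge1 : 1 <= k%:R :> R by rewrite ler1n; near: k; exact: nbhs_infty_ge.
have k_big : (9 / eps) ^+ 2 < k%:R :> R by near: k; exact: nbhs_infty_gtr.
have sqrt_k_big : 9 / eps < Num.sqrt k%:R.
  by rewrite -[9 / eps]ger0_norm ?divr_ge0 ?ltW // -sqrtr_sqr ltr_sqrt // (lt_le_trans ltr01).
rewrite ger0_norm ?divr_ge0 ?sqr_ge0 //; apply: le_lt_trans (half_ln_sqr_div_le k_ge1) _.
have sqrt_k_gt0 : 0 < Num.sqrt k%:R :> R by rewrite sqrtr_gt0; lra.
by rewrite ltr_pdivrMr // mulrC -ltr_pdivrMr.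
Unshelve. all: by end_near.
Qed.

End RealBounds.

Section ThetaPhiAsymptotics.
Context {R : realType} {theta phi : nat -> R} {zeta : R}.
Hypotheses (theta0 : theta 0%N = 1)
  (thetaS : forall k, 0 < theta k.+1 /\ theta k.+1 ^+ 2 - theta k.+1 = theta k ^+ 2)
  (phi_gt0 : forall k, 0 < phi k)
  (phiS : forall k, phi k.+1 ^+ 2 - phi k.+1 = 2 * theta k ^+ 2)
  (theta_cvg : (fun k : nat => 2 * theta k - k%:R - 1 - 2^-1 * ln (k%:R : R)) @ \oo --> zeta).

Local Notation A k := ((k%:R : R) + zeta + (Num.sqrt 2)^-1).

Lemma theta_ge k : 1 + k%:R / 2 <= theta k.
Proof.
elim: k => [|k IHk]; first by rewrite theta0 mul0r addr0.
have [theta_gt0 thetaE] := thetaS k.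
have k_half_ge0 : 0 <= k%:R / 2 :> R by rewrite divr_ge0.
have := sqr_sub_self_ge theta_gt0 (le_trans (addr_ge0 ler01 k_half_ge0) IHk) thetaE.
by rewrite -[k.+1]addn1 natrD; lra.
Qed.

Lemma theta_gt0 k : 0 < theta k.
Proof. by apply: lt_le_trans (theta_ge k); rewrite ltr_pwDl ?divr_ge0. Qed.

Lemma sqrt2_phi_expansion :
  (fun k : nat => Num.sqrt 2 * phi k - A k - ln (k%:R : R) / 2) @ \oo --> 0.
Proof.
pose a (m : nat) : R := Num.sqrt 2 * phi m.+1 - (Num.sqrt 2)^-1 - 2 * theta m.
pose b (m : nat) : R := 2 * theta m - m%:R - 1 - 2^-1 * ln (m%:R : R) - zeta.
pose c (m : nat) : R := (ln (m.+1%:R : R) - ln (m%:R : R)) / 2.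
have harmonic_cvg := @cvg_harmonic R.
have a_cvg : a @ \oo --> 0.
  apply: (squeeze_cvgr _ (cvg_cst 0) harmonic_cvg); near=> m.
  have /andP[-> a_le] := sqrt2_mul_root_bounds (phi_gt0 m.+1) (theta_gt0 m) (phiS m).
  apply: le_trans a_le _; rewrite /harmonic /= lef_pV2 ?posrE ?mulr_gt0 ?theta_gt0 //.
  by have := theta_ge m; have := ler0n R m; rewrite -[m.+1%:R]natr1; lra.
have b_cvg : b @ \oo --> 0 by apply/subr_cvg0.
have c_cvg : c @ \oo --> 0.
  rewrite -cvg_shiftS; apply: (squeeze_cvgr _ (cvg_cst 0) harmonic_cvg); near=> m.
  have /andP[ln_ge ln_le] := @ln_succ_sub_bounds R m.+1%:R (ltr0Sn _ _).
  rewrite /harmonic /c /= -[m.+2%:R]natr1; apply/andP; split; first lra.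
  by apply: le_trans ln_le; rewrite ler_pdivrMr // ler_peMr //; lra.
have abc_cvg : (a + b - c) @ \oo --> (0 + 0 - 0 : R) by apply: cvgB => //; apply: cvgD.
rewrite subr0 addr0 in abc_cvg.
rewrite -cvg_shiftS (@eq_cvg _ _ _ _ (a + b - c)); first exact: abc_cvg.
by move=> m; rewrite !fctE /a /b /c /= -[m.+1%:R]natr1; ring.
Unshelve. all: by end_near.
Qed.

Lemma sqrt2_phi_inv_sqr_expansion :
  (fun k : nat => (((Num.sqrt 2 * phi k) ^+ 2)^-1 - (A k ^+ 2)^-1
                   + 2 * (ln (k%:R : R) / 2) / A k ^+ 3) * k%:R ^+ 3) @ \oo --> 0.
Proof.
have e_cvg := (cvgr0Pnorm_lt _).1 sqrt2_phi_expansion.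
have r_cvg := (cvgr0Pnorm_lt _).1 (@half_ln_sqr_div_cvg0 R).
apply/cvgr0Pnorm_lt => eps eps_gt0; near=> k.
have k_ge1 : (1 <= k)%N by near: k; exact: nbhs_infty_ge.
have k_big : 2 * `|zeta| < k%:R by near: k; exact: nbhs_infty_gtr.
have e_le1 : `|Num.sqrt 2 * phi k - A k - ln (k%:R : R) / 2| < 1.
  by near: k; exact: e_cvg.
have e_small : `|Num.sqrt 2 * phi k - A k - ln (k%:R : R) / 2| < eps / 32.
  by near: k; apply: e_cvg; rewrite divr_gt0.
have r_small : `|(ln (k%:R : R) / 2 + 1) ^+ 2 / k%:R| < eps / 40.
  by near: k; apply: r_cvg; rewrite divr_gt0.
set B := Num.sqrt 2 * phi k; set l := ln (k%:R : R) / 2.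
have k_gt0 : 0 < k%:R :> R by rewrite ltr0n.
have s2_inv_gt0 : 0 < (Num.sqrt 2)^-1 :> R by rewrite invr_gt0 sqrtr_gt0.
have A_ge : k%:R / 2 <= A k by have := ler_norm (- zeta); rewrite normrN; lra.
have B_ge : k%:R <= B.
  have [m km] : exists m, k = m.+1 by exists k.-1; rewrite prednK.
  have /andP[B_ge _] := sqrt2_mul_root_bounds (phi_gt0 m.+1) (theta_gt0 m) (phiS m).
  by have := theta_ge m; rewrite /B km -[m.+1%:R]natr1; lra.
have l_ge0 : 0 <= l by rewrite divr_ge0 // ln_ge0 // ler1n.
have BE : B = A k + l + (B - A k - l) by ring.
apply: le_lt_trans (inv_sqr_expansion_bound k_gt0 A_ge B_ge l_ge0 (ltW e_le1) BE) _.
rewrite ger0_norm ?divr_ge0 ?sqr_ge0 // in r_small; rewrite /l; lra.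
Unshelve. all: by end_near.
Qed.

Lemma rate_bound_expansion (C : R) :
  (fun k : nat =>
     (C / (2 * phi k ^+ 2) - (C / A k ^+ 2 - C * ln (k%:R : R) / A k ^+ 3)) * k%:R ^+ 3)
    @ \oo --> 0.
Proof.
rewrite -(mulr0 C); apply: (cvg_trans _ (cvgMl_tmp sqrt2_phi_inv_sqr_expansion)).
apply: near_eq_cvg; near=> k.
rewrite exprMn sqr_sqrtr // [2 * (_ / 2)]mulrC divfK //; ring.
Unshelve. all: by end_near.
Qed.
End ThetaPhiAsymptotics.

Theorem corollary3 (R : realType) (n : nat) (f : 'rV[R]_n -> R) (L : R)
  (xs : 'rV[R]_n) (theta phi : nat -> R) (zeta : R)
  (x y xt : nat -> 'rV[R]_n) :
  convex_fun f ->
  (forall z : 'rV[R]_n, differentiable f z) ->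
  0 < L ->
  (forall u v : 'rV[R]_n, enorm (gradient f u - gradient f v) <= L * enorm (u - v)) ->
  (forall z : 'rV[R]_n, f xs <= f z) ->
  (* theta k stands for the paper's theta_k (k >= 0); theta_{-1} = 0 *)
  theta 0%N = 1 ->
  (forall k : nat, 0 < theta k.+1 /\ theta k.+1 ^+ 2 - theta k.+1 = theta k ^+ 2) ->
  (forall k : nat, 0 < phi k) ->
  phi 0%N ^+ 2 - phi 0%N = 2 * 0 ^+ 2 ->
  (forall k : nat, phi k.+1 ^+ 2 - phi k.+1 = 2 * theta k ^+ 2) ->
  (* zeta is the limit given in the context *)
  (fun k : nat => 2 * theta k - k%:R - 1 - 2^-1 * ln (k%:R : R)) @ \oo --> zeta ->
  y 0%N = x 0%N ->
  xt 0%N = x 0%N ->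
  (forall k : nat,
     y k.+1 = x k - L^-1 *: gradient f (x k) /\
     x k.+1 = y k.+1 + ((theta k - 1) / theta k.+1) *: (y k.+1 - y k)
                     + (theta k / theta k.+1) *: (y k.+1 - x k) /\
     xt k.+1 = y k.+1 + ((theta k - 1) / phi k.+1) *: (y k.+1 - y k)
                      + (theta k / phi k.+1) *: (y k.+1 - x k)) ->
  (forall k : nat,
     f (xt k) - f xs <= L * enorm (x 0%N - xs) ^+ 2 / (2 * phi k ^+ 2)) /\
  (fun k : nat =>
     (L * enorm (x 0%N - xs) ^+ 2 / (2 * phi k ^+ 2)
      - (L * enorm (x 0%N - xs) ^+ 2 / (k%:R + zeta + (Num.sqrt 2)^-1) ^+ 2
         - L * enorm (x 0%N - xs) ^+ 2 * ln (k%:R : R)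
             / (k%:R + zeta + (Num.sqrt 2)^-1) ^+ 3))
     * (k%:R) ^+ 3) @ \oo --> (0 : R).
Proof.
move=> f_convex f_diff L_gt0 f_lip xs_min theta0 thetaS phi_gt0 phi0 phiS theta_cvg _ xt0 step.
split; last exact: rate_bound_expansion theta0 thetaS phi_gt0 phiS theta_cvg _.
exact: ogm_rate f_diff L_gt0 f_lip f_convex xs_min theta0 thetaS phi_gt0 phi0 phiS xt0 step.
Qed.
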